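(* Let $T$ be a left-linear term rewriting system and $\psi$ a convergent proof term for $T$. Then (a) $tgt(\psi)$ is defined; and (b) for every $n<\omega$, if $mind(\psi)>n$ then $d(src(\psi),tgt(\psi))<2^{-n}$.
   Context: Setting. $T=(\Sigma,R)$: $\Sigma$ finite; rules $\mu: l\to r$ with $l$ finite, non-variable, linear, variables of $r$ among those of $l$; $r$ may be infinite. Terms are finite or infinite trees; $d(t,u)=0$ if $t=u$ and $2^{-k}$ otherwise, $k$ the least length of a position where $t$ and $u$ differ; limits are w.r.t. $d$. Multisteps. $\Sigma^R$ is $\Sigma$ plus a symbol $\mu$ of arity $n$ for each rule $\mu: l[x_1,..,x_n]\to r[x_1,..,x_n]$. A multistep is a closed finite or infinite term over $\Sigma^R$; $src$ = its normal form under $\mu(\vec x)\to l[\vec x]$, $tgt$ = its normal form (if any, via strongly convergent reduction) under $\mu(\vec x)\to r[\vec x]$; convergent iff $tgt$ defined; $mind=\omega$ if no rule symbol, else the least depth of a rule-symbol occurrence. Proof terms (over $\Sigma^R\cup\{\cdot/2\}$) with partial $src,tgt$, convergence and $mind$: the least set closed under (i) multisteps; (ii) $\psi_1\cdot\psi_2$ for $\psi_1$ convergent, $tgt(\psi_1)=src(\psi_2)$: $src=src(\psi_1)$, $tgt=tgt(\psi_2)$, convergent iff $\psi_2$ is, $mind=\min$; (iii) $\prod_{i<\omega}\psi_i=\psi_0\cdot(\psi_1\cdot\cdots)$ for convergent $\psi_i$ with $tgt(\psi_i)=src(\psi_{i+1})$: $src=src(\psi_0)$, $tgt=\lim_i tgt(\psi_i)$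 (undefined if no limit), $mind=\min_i mind(\psi_i)$, convergent iff for every $k$ there is $n$ with $mind(\psi_j)>k$ for $j>n$; (iv) $f(\psi_1,..,\psi_m)$, $f\in\Sigma$: $src,tgt$ componentwise, convergent iff all $\psi_i$ are, $mind=1+\min$; (v) $\mu(\psi_1,..,\psi_n)$: $src=l[src(\psi_1),..]$, $tgt=r[tgt(\psi_1),..]$, convergent iff $\psi_i$ convergent whenever $x_i$ occurs in $r$, $mind=0$. *)

From Stdlib Require Import Reals List Arith ClassicalEpsilon.
Import ListNotations.
Set Implicit Arguments.

(* A (possibly infinite) term over a symbol type S is given by its labelling
   function on positions; positions are lists of argument indices read from
   the root ([] = root, p ++ [i] = i-th child of p). *)
Definition tree (S : Type) := list nat -> option S.

Definition wf {S : Type} (ar : S -> nat) (t : tree S) : Prop :=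
  (exists s, t [] = Some s) /\
  forall p i, (exists s, t (p ++ [i]) = Some s) <-> (exists s, t p = Some s /\ i < ar s).

Definition subtree {S : Type} (t : tree S) (p : list nat) : tree S :=
  fun q => t (p ++ q).

Fixpoint strip_prefix (p q : list nat) : option (list nat) :=
  match p, q with
  | [], _ => Some q
  | i :: p', j :: q' => if Nat.eqb i j then strip_prefix p' q' else None
  | _ :: _, [] => None
  end.

Definition replace {S : Type} (t : tree S) (p : list nat) (u : tree S) : tree S :=
  fun q => match strip_prefix p q with Some r => u r | None => t q end.

Definition fun_tree {S : Type} (ar : S -> nat) (f : S) (us : nat -> tree S) : tree S :=
  fun p => match p with
           | [] => Some f
           | i :: p' => if Nat.ltb i (ar f) then us i p' else None
           end.

Fixpoint subst_aux {F S : Type} (t : tree (F + nat)) (sigma : nat -> tree S)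
  (emb : F -> S) (q p : list nat) : option S :=
  match t q with
  | None => None
  | Some (inr x) => sigma x p
  | Some (inl f) =>
      match p with
      | [] => Some (emb f)
      | i :: p' => subst_aux t sigma emb (q ++ [i]) p'
      end
  end.

Definition subst {F S : Type} (t : tree (F + nat)) (sigma : nat -> tree S)
  (emb : F -> S) : tree S := subst_aux t sigma emb [].

Definition differ_at {S : Type} (t u : tree S) (k : nat) : Prop :=
  exists p, length p = k /\ t p <> u p.

(* d(t,u) = 0 if t = u, 2^-k otherwise, k the least length of a position
   where t and u differ. *)
Definition tdist {S : Type} (t u : tree S) : R :=
  match excluded_middle_informative (exists k, differ_at t u k) with
  | left _ =>
      (/ 2) ^ (epsilon (inhabits 0%nat)
                 (fun k => differ_at t u k /\ forall j, (j < k)%nat -> ~ differ_at t u j))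
  | right _ => 0%R
  end.

Definition converges {S : Type} (ts : nat -> tree S) (u : tree S) : Prop :=
  forall eps : R, (0 < eps)%R ->
    exists N, forall i, (N <= i)%nat -> (tdist (ts i) u < eps)%R.

Definition var_ar {F : Type} (ar : F -> nat) (s : F + nat) : nat :=
  match s with inl f => ar f | inr _ => 0 end.

(* Convention: the variables of the
   left-hand side l of rule mu are exactly x_0, ..., x_{rar mu - 1}
   (written inr 0, ..., inr (rar mu - 1)), each occurring once (linearity). *)
Record TRS := {
  sym : Type;
  arity : sym -> nat;
  sym_finite : exists l : list sym, forall f, In f l;
  rule : Type;
  rar : rule -> nat;
  lhs : rule -> tree (sym + nat);
  rhs : rule -> tree (sym + nat);
  lhs_wf : forall mu, wf (var_ar arity) (lhs mu);
  rhs_wf : forall mu, wf (var_ar arity) (rhs mu);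
  lhs_finite : forall mu, exists ps : list (list nat),
      forall p, lhs mu p <> None -> In p ps;
  lhs_nonvar : forall mu, exists f, lhs mu [] = Some (inl f);
  lhs_vars : forall mu x, (exists p, lhs mu p = Some (inr x)) <-> x < rar mu;
  lhs_linear : forall mu x p q,
      lhs mu p = Some (inr x) -> lhs mu q = Some (inr x) -> p = q;
  rhs_vars : forall mu x p, rhs mu p = Some (inr x) -> x < rar mu
}.

Section ProofTerms.
Context (T : TRS).

Definition term := tree (sym T).
Definition mstree := tree (sym T + rule T).

Definition ms_ar (s : sym T + rule T) : nat :=
  match s with inl f => arity T f | inr mu => rar T mu end.

Definition is_multistep (m : mstree) : Prop := wf ms_ar m.

Definition embF (s : term) : mstree := fun p => option_map inl (s p).

(* one step of  mu(x_0..x_{n-1}) -> rho mu [x_0..x_{n-1}]  at position p *)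
Definition ms_step (rho : rule T -> tree (sym T + nat)) (p : list nat)
  (t t' : mstree) : Prop :=
  exists mu, t p = Some (inr mu) /\
    t' = replace t p (subst (rho mu) (fun i => subtree t (p ++ [i])) inl).

(* m reduces, by a strongly convergent reduction (of length <= omega), to
   the normal form s (a term without rule symbols). *)
Definition nf_reduct (rho : rule T -> tree (sym T + nat)) (m : mstree) (s : term)
  : Prop :=
  (exists (n : nat) (ts : nat -> mstree) (ps : nat -> list nat),
      ts 0 = m /\ (forall i, i < n -> ms_step rho (ps i) (ts i) (ts (S i))) /\
      ts n = embF s)
  \/
  (exists (ts : nat -> mstree) (ps : nat -> list nat),
      ts 0 = m /\ (forall i, ms_step rho (ps i) (ts i) (ts (S i))) /\
      (forall k, exists N, forall i, N <= i -> k <= length (ps i)) /\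
      converges ts (embF s)).

Definition ms_src (m : mstree) (s : term) : Prop := nf_reduct (lhs T) m s.
Definition ms_tgt (m : mstree) (u : term) : Prop := nf_reduct (rhs T) m u.

(* Syntax of proof terms; argument families are indexed by nat, only the
   indices below the arity are meaningful. PInf ps = prod_{i<omega} ps i. *)
Inductive pterm : Type :=
| PMs   : mstree -> pterm
| PComp : pterm -> pterm -> pterm
| PInf  : (nat -> pterm) -> pterm
| PFun  : sym T -> (nat -> pterm) -> pterm
| PRule : rule T -> (nat -> pterm) -> pterm.

Definition occurs_rhs (mu : rule T) (i : nat) : Prop :=
  exists p, rhs T mu p = Some (inr i).

(* mind_gt psi n  :<->  n < mind(psi)   (mind(psi) in omega + 1) *)
Fixpoint mind_gt (psi : pterm) (n : nat) : Prop :=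
  match psi with
  | PMs m => forall p mu, length p <= n -> m p <> Some (inr mu)
  | PComp p q => mind_gt p n /\ mind_gt q n
  | PInf ps => forall i, mind_gt (ps i) n
  | PFun f a => match n with
                | 0 => True
                | S n' => forall i, i < arity T f -> mind_gt (a i) n'
                end
  | PRule _ _ => False
  end.

Fixpoint conv (psi : pterm) : Prop :=
  match psi with
  | PMs m => exists u, ms_tgt m u
  | PComp p q => conv q
  | PInf ps => forall k, exists n, forall j, n < j -> mind_gt (ps j) k
  | PFun f a => forall i, i < arity T f -> conv (a i)
  | PRule mu a => forall i, occurs_rhs mu i -> conv (a i)
  end.

Inductive Src : pterm -> term -> Prop :=
| Src_ms m s : ms_src m s -> Src (PMs m) s
| Src_comp p q s : Src p s -> Src (PComp p q) s
| Src_inf ps s : Src (ps 0) s -> Src (PInf ps) s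
| Src_fun f a ss : (forall i, i < arity T f -> Src (a i) (ss i)) ->
    Src (PFun f a) (fun_tree (arity T) f ss)
| Src_rule mu a ss : (forall i, i < rar T mu -> Src (a i) (ss i)) ->
    Src (PRule mu a) (subst (lhs T mu) ss (fun f => f)).

Inductive Tgt : pterm -> term -> Prop :=
| Tgt_ms m u : ms_tgt m u -> Tgt (PMs m) u
| Tgt_comp p q u : Tgt q u -> Tgt (PComp p q) u
| Tgt_inf ps us u : (forall i, Tgt (ps i) (us i)) -> converges us u ->
    Tgt (PInf ps) u
| Tgt_fun f a us : (forall i, i < arity T f -> Tgt (a i) (us i)) ->
    Tgt (PFun f a) (fun_tree (arity T) f us)
| Tgt_rule mu a us : (forall i, occurs_rhs mu i -> Tgt (a i) (us i)) ->
    Tgt (PRule mu a) (subst (rhs T mu) us (fun f => f)).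

Fixpoint is_pterm (psi : pterm) : Prop :=
  match psi with
  | PMs m => is_multistep m
  | PComp p q => is_pterm p /\ is_pterm q /\ conv p /\
                 exists w, Tgt p w /\ Src q w
  | PInf ps => forall i, is_pterm (ps i) /\ conv (ps i) /\
                 exists w, Tgt (ps i) w /\ Src (ps (S i)) w
  | PFun f a => forall i, i < arity T f -> is_pterm (a i)
  | PRule mu a => forall i, i < rar T mu -> is_pterm (a i)
  end.

End ProofTerms.

(* Two trees are at distance < 2^-n iff they agree on all positions of
   length <= n.  A multistep without rule symbols up to depth n
   is left unchanged up to depth n by every contraction, so both its source
   and its target agree with it, hence with each other, up to depth n; this
   propagates through compositions, contexts and infinite products.  In an
   infinite product the convergence condition makes the targets of the
   factors agree up to any given depth from some index on, and such a
   sequence of trees has a limit (read off pointwise), which is a target. *)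
From Stdlib Require Import Reals.
From Stdlib Require Import Arith Lia Lra Wf_nat ClassicalEpsilon Classical.

Definition agree_upto {A : Type} (n : nat) (t u : tree A) : Prop :=
  forall p, length p <= n -> t p = u p.

Lemma agree_upto_refl {A} n (t : tree A) : agree_upto n t t.
Proof. intros p _; reflexivity. Qed.

Lemma agree_upto_sym {A} n (t u : tree A) : agree_upto n t u -> agree_upto n u t.
Proof. intros H p Hp; symmetry; auto. Qed.

Lemma agree_upto_trans {A} n (t v u : tree A) :
  agree_upto n t v -> agree_upto n v u -> agree_upto n t u.
Proof. intros H1 H2 p Hp; rewrite H1; auto. Qed.

Lemma half_pow_lt_iff n k : ((/ 2) ^ k < (/ 2) ^ n)%R <-> n < k.
Proof.
  rewrite !pow_inv.
  assert (Hpos : forall j, (0 < 2 ^ j)%R) by (intro; apply pow_lt; lra).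
  split; intro H.
  - destruct (le_lt_dec k n) as [Hkn|]; auto.
    pose proof (Rle_pow 2 k n ltac:(lra) Hkn).
    pose proof (Rinv_le_contravar _ _ (Hpos k) H0). lra.
  - apply Rinv_lt_contravar; [apply Rmult_lt_0_compat; auto | apply Rlt_pow; auto; lra].
Qed.

Lemma exists_least_nat (P : nat -> Prop) :
  (exists k, P k) -> exists k, P k /\ forall j, j < k -> ~ P j.
Proof.
  intro Hex.
  destruct (dec_inh_nat_subset_has_unique_least_element P (fun k => classic (P k)) Hex)
    as [k [[Hk Hmin] _]].
  exists k; split; auto. intros j Hj Pj. specialize (Hmin j Pj). lia.
Qed.

Lemma agree_upto_iff_no_difference {A} n (t u : tree A) :
  agree_upto n t u <-> forall j, j <= n -> ~ differ_at t u j.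
Proof.
  split.
  - intros H j Hj [p [Hl Hne]]. apply Hne, H. lia.
  - intros H p Hp. destruct (classic (t p = u p)) as [|Hne]; auto.
    exfalso; apply (H (length p)); [lia | exists p; auto].
Qed.

Lemma tdist_lt_half_pow {A} n (t u : tree A) :
  (tdist t u < (/ 2) ^ n)%R <-> agree_upto n t u.
Proof.
  rewrite agree_upto_iff_no_difference. unfold tdist.
  destruct (excluded_middle_informative _) as [Hex|Hnone].
  - set (P := fun k => differ_at t u k /\ forall j, j < k -> ~ differ_at t u j).
    destruct (epsilon_spec (inhabits 0) P (exists_least_nat _ Hex)) as [Hd Hmin].
    generalize dependent (epsilon (inhabits 0) P). intros k Hd Hmin.
    rewrite half_pow_lt_iff. split.
    + intros Hnk j Hj. apply Hmin. lia.
    + intro H. destruct (le_lt_dec k n); auto. exfalso; apply (H k); auto.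
  - split.
    + intros _ j _ Hj. apply Hnone; eauto.
    + intros _. apply pow_lt; lra.
Qed.

Lemma converges_iff_agree_upto {A} (us : nat -> tree A) u :
  converges us u <->
  forall k, exists N, forall i, N <= i -> agree_upto k (us i) u.
Proof.
  split.
  - intros H k. destruct (H ((/ 2) ^ k)%R) as [N HN]; [apply pow_lt; lra|].
    exists N; intros i Hi; apply tdist_lt_half_pow; auto.
  - intros H eps Heps.
    destruct (pow_lt_1_zero (/ 2) ltac:(rewrite Rabs_right; lra) eps Heps) as [k Hk].
    specialize (Hk k (Nat.le_refl k)). rewrite Rabs_right in Hk by (left; apply pow_lt; lra).
    destruct (H k) as [N HN]. exists N. intros i Hi.
    apply Rlt_trans with ((/ 2) ^ k)%R; auto. apply tdist_lt_half_pow; auto.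
Qed.

(* The limit takes its label at p from a tree far enough in the sequence for
   depth [length p]. *)
Lemma agree_upto_cauchy_converges {A} (us : nat -> tree A) :
  (forall k, exists N, forall i j, N <= i -> N <= j -> agree_upto k (us i) (us j)) ->
  exists u, converges us u.
Proof.
  intro H. destruct (choice (fun k N => forall i j, N <= i -> N <= j ->
                                          agree_upto k (us i) (us j)) H) as [Nf HN].
  exists (fun p => us (Nf (length p)) p). apply converges_iff_agree_upto.
  intro k. exists (Nf k). intros i Hi p Hp.
  rewrite (HN k i (Nf (length p) + Nf k) Hi ltac:(lia) p Hp).
  symmetry; apply (HN (length p)); auto; lia.
Qed.

Lemma agree_upto_succ_converges {A} (us : nat -> tree A) :
  (forall k, exists N, forall j, N <= j -> agree_upto k (us j) (us (S j))) ->
  exists u, converges us u.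
Proof.
  intro H. apply agree_upto_cauchy_converges. intro k. destruct (H k) as [N HN].
  assert (Hd : forall d i, N <= i -> agree_upto k (us i) (us (i + d))).
  { induction d; intros i Hi.
    - rewrite Nat.add_0_r; apply agree_upto_refl.
    - rewrite Nat.add_succ_r. apply agree_upto_trans with (us (i + d)); auto.
      apply HN; lia. }
  exists N. intros i j Hi Hj. destruct (le_ge_dec i j).
  - replace j with (i + (j - i)) by lia. auto.
  - apply agree_upto_sym. replace i with (j + (i - j)) by lia. auto.
Qed.

Section Multisteps.
Context {T : TRS}.

Definition rule_free_upto (n : nat) (m : mstree T) : Prop :=
  forall p mu, length p <= n -> m p <> Some (inr mu).

Lemma strip_prefix_shorter p q : length q < length p -> strip_prefix p q = None.
Proof.
  revert q; induction p as [|i p IH]; intros [|j q] H; simpl in *; try lia; auto.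
  destruct (Nat.eqb i j); auto. apply IH; lia.
Qed.

Lemma ms_step_agree_upto rho n p (t t' : mstree T) :
  rule_free_upto n t -> ms_step rho p t t' -> agree_upto n t t'.
Proof.
  intros Hfree [mu [Hp ->]].
  assert (n < length p).
  { destruct (le_lt_dec (length p) n); auto. exfalso; eapply Hfree; eauto. }
  intros q Hq. unfold replace. rewrite strip_prefix_shorter by lia. reflexivity.
Qed.

Lemma rule_free_upto_agree n (m t : mstree T) :
  rule_free_upto n m -> agree_upto n m t -> rule_free_upto n t.
Proof. intros Hfree Ha q mu Hq. rewrite <- (Ha q Hq). auto. Qed.

Lemma ms_steps_agree_upto rho n (ts : nat -> mstree T) ps i :
  rule_free_upto n (ts 0) ->
  (forall j, j < i -> ms_step rho (ps j) (ts j) (ts (S j))) ->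
  agree_upto n (ts 0) (ts i).
Proof.
  intros Hfree; induction i as [|i IH]; intro Hsteps; [apply agree_upto_refl|].
  assert (Hi : agree_upto n (ts 0) (ts i)) by auto.
  apply agree_upto_trans with (ts i); auto.
  eapply ms_step_agree_upto; [eapply rule_free_upto_agree; eauto | auto].
Qed.

Lemma nf_reduct_agree_upto rho n (m : mstree T) s :
  rule_free_upto n m -> nf_reduct rho m s -> agree_upto n m (embF s).
Proof.
  intros Hfree [[k [ts [ps [H0 [Hs Hk]]]]] | [ts [ps [H0 [Hs [_ Hc]]]]]]; subst m.
  - rewrite <- Hk. eapply ms_steps_agree_upto; eauto.
  - destruct (proj1 (converges_iff_agree_upto _ _) Hc n) as [N HN].
    apply agree_upto_trans with (ts N); auto.
    eapply ms_steps_agree_upto; eauto.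
Qed.

Lemma embF_agree_upto n (s u : term T) :
  agree_upto n (embF s) (embF u) -> agree_upto n s u.
Proof.
  intros H p Hp. specialize (H p Hp). unfold embF in H.
  destruct (s p), (u p); simpl in H; congruence.
Qed.

End Multisteps.

Section ProofTerms.
Context {T : TRS}.

Definition has_tgt (psi : pterm T) : Prop := exists u, Tgt psi u.

Definition src_tgt_close (psi : pterm T) : Prop :=
  forall n s u, mind_gt psi n -> Src psi s -> Tgt psi u -> agree_upto n s u.

Lemma ms_src_tgt_close (m : mstree T) : src_tgt_close (PMs m).
Proof.
  intros n s u Hfree Hs Hu. inversion Hs; inversion Hu; subst.
  apply embF_agree_upto, agree_upto_trans with m.
  - apply agree_upto_sym. eapply nf_reduct_agree_upto; eauto.
  - eapply nf_reduct_agree_upto; eauto.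
Qed.

Lemma comp_src_tgt_close (p q : pterm T) :
  (exists w, Tgt p w /\ Src q w) ->
  src_tgt_close p -> src_tgt_close q -> src_tgt_close (PComp p q).
Proof.
  intros [w [Hpw Hqw]] Hp Hq n s u [Hmp Hmq] Hs Hu. inversion Hs; inversion Hu; subst.
  apply agree_upto_trans with w; eauto.
Qed.

Lemma fun_has_tgt f (a : nat -> pterm T) :
  (forall i, i < arity T f -> has_tgt (a i)) -> has_tgt (PFun f a).
Proof.
  intro Ha.
  destruct (choice (fun i u => i < arity T f -> Tgt (a i) u)) as [us Hus].
  { intro i. destruct (lt_dec i (arity T f)) as [Hi|Hi].
    - destruct (Ha i Hi) as [u Hu]; eauto.
    - exists (fun _ => None); lia. }
  exists (fun_tree (arity T) f us); constructor; auto.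
Qed.

Lemma fun_src_tgt_close f (a : nat -> pterm T) :
  (forall i, i < arity T f -> src_tgt_close (a i)) -> src_tgt_close (PFun f a).
Proof.
  intros Ha n s u Hm Hs Hu. inversion Hs; inversion Hu; subst.
  destruct n as [|n]; intros [|i p] Hp; simpl in *; try lia; auto.
  destruct (Nat.ltb i (arity T f)) eqn:E; auto.
  apply Nat.ltb_lt in E. eapply Ha; eauto. lia.
Qed.

Lemma rule_has_tgt mu (a : nat -> pterm T) :
  (forall i, occurs_rhs T mu i -> has_tgt (a i)) -> has_tgt (PRule mu a).
Proof.
  intro Ha.
  destruct (choice (fun i u => occurs_rhs T mu i -> Tgt (a i) u)) as [us Hus].
  { intro i. destruct (classic (occurs_rhs T mu i)) as [Hi|Hi].
    - destruct (Ha i Hi) as [u Hu]; eauto.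
    - exists (fun _ => None); tauto. }
  exists (subst (rhs T mu) us (fun f => f)); constructor; auto.
Qed.

Section InfiniteProduct.
Variables (ps : nat -> pterm T) (ws : nat -> term T).
Hypothesis ws_junction : forall i, Tgt (ps i) (ws i) /\ Src (ps (S i)) (ws i).
Hypothesis ps_close : forall i, src_tgt_close (ps i).

Lemma junctions_agree_upto n i :
  mind_gt (ps (S i)) n -> agree_upto n (ws i) (ws (S i)).
Proof. intro Hm. apply (ps_close (S i)); auto; apply ws_junction. Qed.

Lemma inf_has_tgt : conv (PInf ps) -> has_tgt (PInf ps).
Proof.
  intro Hc. destruct (agree_upto_succ_converges ws) as [u Hu].
  - intro k. destruct (Hc k) as [N HN]. exists N. intros j Hj.
    apply junctions_agree_upto, HN. lia.
  - exists u. apply Tgt_inf with ws; auto. apply ws_junction.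
Qed.

Lemma inf_src_tgt_close : src_tgt_close (PInf ps).
Proof.
  intros n s u Hm Hs Hu.
  inversion Hs; inversion Hu as [| | ? vs ? Hvs_tgt Hvs | |]; subst.
  assert (Hchain : forall i, agree_upto n s (ws i)).
  { induction i as [|i IH].
    - apply (ps_close 0); auto; apply ws_junction.
    - apply agree_upto_trans with (ws i); auto. apply junctions_agree_upto, Hm. }
  destruct (proj1 (converges_iff_agree_upto _ _) Hvs n) as [N HN].
  apply agree_upto_trans with (vs (S N)); auto.
  apply agree_upto_trans with (ws N); auto.
  apply (ps_close (S N)); auto; apply ws_junction.
Qed.

End InfiniteProduct.

Lemma pterm_has_tgt_and_close (psi : pterm T) :
  is_pterm psi -> conv psi -> has_tgt psi /\ src_tgt_close psi.
Proof.
  induction psi as [m | p IHp q IHq | ps IH | f a IH | mu a IH]; simpl; intros Hpt Hc.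
  - split; [destruct Hc as [u Hu]; exists u; constructor; auto | apply ms_src_tgt_close].
  - destruct Hpt as [Hp [Hq [Hcp Hw]]].
    destruct (IHp Hp Hcp) as [_ Hclp], (IHq Hq Hc) as [[u Hu] Hclq].
    split; [exists u; constructor; auto | apply comp_src_tgt_close; auto].
  - destruct (choice (fun i w => Tgt (ps i) w /\ Src (ps (S i)) w)) as [ws Hws].
    { intro i; apply Hpt. }
    assert (Hcl : forall i, src_tgt_close (ps i))
      by (intro i; destruct (Hpt i) as [Hi [Hci _]]; apply IH; auto).
    split; [apply inf_has_tgt with ws | apply inf_src_tgt_close with ws]; auto.
  - split; [apply fun_has_tgt | apply fun_src_tgt_close]; intros i Hi; apply IH; auto.
  - split.
    + apply rule_has_tgt. intros i Hi. apply IH; auto.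
      apply Hpt. destruct Hi as [p Hp]. eapply rhs_vars; eauto.
    + intros n s u [].
Qed.

End ProofTerms.

Theorem mainTheorem9 (T : TRS) (psi : pterm T) :
  is_pterm psi -> conv psi ->
  (exists u, Tgt psi u) /\
  (forall (n : nat) (s u : term T),
      mind_gt psi n -> Src psi s -> Tgt psi u -> (tdist s u < (/ 2) ^ n)%R).
Proof.
  intros Hpt Hc. destruct (pterm_has_tgt_and_close psi Hpt Hc) as [Htgt Hclose].
  split; auto.
  intros n s u Hm Hs Hu. apply tdist_lt_half_pow. eauto.
Qed.
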